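(* There is a constant $C>0$ such that for all $a\neq b$ in $\mathbb{R}/\tau\mathbb{Z}$ and all $\phi\in\mathbb{R}$, $$\sum_{n\in Z(a,b)}w(n-\phi)^{3/2}\le C\,\frac{\sum_{n\in Z(a,b)}w(n-\phi)^{5/2}}{\sum_{n\in Z(a,b)}w(n-\phi)}.$$
   Context: $\tau=\frac{1+\sqrt5}{2}$; $w(x)=\frac1\pi\left(\tan^{-1}(x+1)-\tan^{-1}(x)\right)$. For real $x$, $x\bmod\tau$ is its image in $\mathbb{R}/\tau\mathbb{Z}$. For $a,b\in\mathbb{R}/\tau\mathbb{Z}$, $(a,b)$ denotes the open arc from $a$ to $b$ in the positive direction, and $Z(a,b)$ is the set of integers $n$ with $n\bmod\tau\in(a,b)$. The constant $C$ is independent of all variables. *)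

From HB Require Import structures.
From mathcomp Require Import all_boot all_order all_algebra.
From mathcomp Require Import all_classical all_reals all_analysis.
Set Implicit Arguments. Unset Strict Implicit. Unset Printing Implicit Defensive.
Import Order.TTheory GRing.Theory Num.Theory.
Local Open Scope ring_scope.
Local Open Scope classical_set_scope.

Section Defs.
Variable R : realType.

Definition tau : R := (1 + Num.sqrt 5) / 2.

Definition w (x : R) : R := (atan (x + 1) - atan x) / pi.

Definition modtau (x : R) : R := x - tau * (Num.floor (x / tau))%:~R.

(* x mod tau lies on the open arc from a to b (positive direction) in R/tauZ:
   its positive-direction offset from a is strictly between 0 and that of b. *)
Definition in_arc (a b x : R) : Prop := 0 < modtau (x - a) < modtau (b - a).

Definition Zab (a b : R) : set int := [set n : int | in_arc a b n%:~R].

Definition Wsum (a b phi p : R) : \bar R :=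
  (\esum_(n in Zab a b) ((w (n%:~R - phi)) `^ p)%:E)%E.

End Defs.

(* Write l for the length of the arc (a, b) and t_n = n - phi + 1/2, so that
   w (n - phi) is comparable to 1 / (1 + t_n^2).  The set Z(a,b) is governed by
   the arithmetic of Z[tau]: two of its points differ by an integer h such that
   |h - j tau| < l for some integer j, and since the norm h^2 - h j - j^2 of
   h - j tau is a nonzero integer, |h| >= 1 / (3 l).  Conversely, rescaling
   lattice points of Z[tau] by powers of the unit tau^2 shows that every real
   number lies within 28 / l of Z(a,b).  Let s in Z(a,b) nearly minimise
   D = |t_s|.  Then D <= 28 / l + 1, so the points of Z(a,b) are
   (1 + D) / 100-separated, and numbering them by the cell of length
   (1 + D) / 100 containing t_n yields an injection kap into nat with
   w (n - phi) <= K w (s - phi) / ((kap n + 1) (kap n + 2)).  Consequently, for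
   every p >= 1, the sum of the w (n - phi)^p lies between w (s - phi)^p and
   (K w (s - phi))^p, which gives the inequality with C = K^(5/2). *)

From Pilot Require Import Defs.
From mathcomp Require Import all_boot all_order all_algebra.
From mathcomp Require Import all_classical all_reals all_analysis.
From mathcomp Require Import lra ring zify.
Import Order.TTheory GRing.Theory Num.Theory numFieldTopology.Exports.
Local Open Scope classical_set_scope.
Local Open Scope ring_scope.

Lemma golden_norm_neq0 (h j : int) : h != 0 -> h ^+ 2 - h * j - j ^+ 2 != 0.
Proof.
move=> h0; apply/eqP => norm0.
have sq5 : (2 * h - j) ^+ 2 = 5 * j ^+ 2.
  by apply/eqP; rewrite -subr_eq0 -[X in _ == X](mulr0 4) -norm0; apply/eqP; ring.
have j0 : j != 0.
  apply/eqP => j0; move/eqP: norm0; rewrite j0 mulr0 expr0n !subr0 sqrf_eq0.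
  exact/negP.
have sq5N : (`|(2 * h - j)%R| ^ 2 = 5 * `|j|%N ^ 2)%N by rewrite -!abszX sq5 abszM.
have x0 : (0 < `|(2 * h - j)%R|)%N.
  rewrite absz_gt0; apply/eqP => x0; move: sq5N; rewrite x0 /=.
  have : (0 < `|j|)%N by rewrite absz_gt0.
  nia.
(* The 5-adic valuation is even on the left and odd on the right. *)
have := congr1 (logn 5) sq5N.
rewrite lognM ?expn_gt0 ?absz_gt0 ?j0 // !lognX (logn_prime 5 (isT : prime 5)) eqxx.
lia.
Qed.

Lemma bernoulli_expr (R : realDomainType) (x : R) (k : nat) :
  0 <= x -> 1 + k%:R * x <= (1 + x) ^+ k.
Proof.
move=> x0; elim: k => [|k IH]; first by rewrite mul0r addr0 expr0.
rewrite exprS -natr1 mulrDl mul1r.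
have : 1 <= (1 + x) ^+ k by apply: exprn_ege1; lra.
have : 0 <= k%:R * x by rewrite mulr_ge0.
nra.
Qed.

Lemma exists_expr_bracket (R : archiRealFieldType) (x l y : R) :
  1 < x -> 0 < l -> l < y -> exists k, y <= x ^+ k * l < x * y.
Proof.
move=> x1 l0 ly.
have [k Pk] : exists k, y <= x ^+ k * l.
  have [n yn] : exists n : nat, y / (l * (x - 1)) < n%:R.
    exists (Num.Def.archi_bound (y / (l * (x - 1)))).
    by rewrite archi_boundP // divr_ge0 // ?mulr_ge0; lra.
  exists n; move: yn; rewrite ltr_pdivrMr ?mulr_gt0 ?subr_gt0 // => yn.
  have := @bernoulli_expr _ (x - 1) n; rewrite [1 + (x - 1)]addrC subrK subr_ge0.
  move=> /(_ (ltW x1)) B.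
  have : 0 <= n%:R * (x - 1) by rewrite mulr_ge0 ?ler0n //; lra.
  nra.
have {k Pk} [k Pk Pmin] := ex_minnP (ex_intro _ k Pk : exists k, (y <= x ^+ k * l)%R).
have k0 : (0 < k)%N by case: k Pk {Pmin} => [|//]; rewrite expr0 mul1r; lra.
exists k; rewrite Pk /=.
have : ~~ (y <= x ^+ k.-1 * l) by apply/negP => /Pmin; lia.
rewrite -ltNge -(prednK k0) exprS -mulrA => ?.
by rewrite ltr_pM2l //; lra.
Qed.

Definition zigzag (z : int) : nat := if 0 <= z then (2 * `|z|)%N else (2 * `|z|).-1.

Lemma zigzag_inj : injective zigzag.
Proof. by move=> [] n1 [] n2; rewrite /zigzag /= ?NegzE /=; lia. Qed.

Lemma zigzag_le z : (zigzag z <= 2 * `|z|)%N.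
Proof. by rewrite /zigzag; case: ifP; lia. Qed.

Section Estimates.
Context {R : realType}.
Local Notation tau := (tau R).

(** * The ring Z[tau] *)

Lemma sqrt5_bounds : 2 < Num.sqrt (5 : R) < 7 / 3.
Proof.
have := sqrtr_ge0 (5 : R); have := sqr_sqrtr (ler0n R 5); rewrite expr2 => ? ?.
by apply/andP; split; nra.
Qed.

Lemma tau_bounds : 3 / 2 < tau < 5 / 3.
Proof. by have /andP[? ?] := sqrt5_bounds; rewrite /Defs.tau; apply/andP; split; lra. Qed.

Lemma tau_gt0 : 0 < tau.
Proof. by have /andP[? _] := tau_bounds; lra. Qed.

Lemma tau_sqr : tau ^+ 2 = tau + 1.
Proof. by have := sqr_sqrtr (ler0n R 5); rewrite /Defs.tau !expr2 => ?; nra. Qed.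

(* Identities in Z[tau] are proved by [ring] after subtracting a multiple of
   the minimal polynomial of tau. *)
Lemma tau_minpolyM (x : R) : x * (tau ^+ 2 - tau - 1) = 0.
Proof. by rewrite tau_sqr (_ : tau + 1 - tau - 1 = 0) ?mulr0 //; ring. Qed.

(* The element h - j tau of Z[tau] and its Galois conjugate h - j (1 - tau). *)
Definition zgold (h j : int) : R := h%:~R - j%:~R * tau.
Definition zgold_conj (h j : int) : R := h%:~R + j%:~R * (tau - 1).

Lemma zgoldD h1 j1 h2 j2 : zgold (h1 + h2) (j1 + j2) = zgold h1 j1 + zgold h2 j2.
Proof. by rewrite /zgold !intrD; ring. Qed.

Lemma zgoldB h1 j1 h2 j2 : zgold (h1 - h2) (j1 - j2) = zgold h1 j1 - zgold h2 j2.
Proof. by rewrite /zgold !intrB; ring. Qed.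

Lemma zgold_norm h j : zgold h j * zgold_conj h j = (h ^+ 2 - h * j - j ^+ 2)%:~R.
Proof.
rewrite /zgold /zgold_conj !(intrB, intrM, rmorphXn); apply/eqP.
by rewrite -subr_eq0 -(tau_minpolyM (- j%:~R ^+ 2)); apply/eqP; ring.
Qed.

Lemma zgold_conj_sub h j : zgold_conj h j - zgold h j = j%:~R * Num.sqrt 5.
Proof. by rewrite /zgold_conj /zgold /Defs.tau; field. Qed.

Lemma zgold_conj_combine h j :
  (tau + 2) * h%:~R = zgold h j + (tau + 1) * zgold_conj h j.
Proof.
apply/eqP; rewrite -subr_eq0 -(tau_minpolyM (- j%:~R)) /zgold /zgold_conj.
by apply/eqP; ring.
Qed.

Lemma zgold_gap l h j : 0 < l <= tau -> h != 0 -> `|zgold h j| < l ->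
  1 <= 3 * l * `|h%:~R|.
Proof.
move=> /andP[l0 ltau] h0 small.
have /andP[t1 t2] := tau_bounds.
have norm1 : 1 <= `|zgold h j| * `|zgold_conj h j|.
  by rewrite -normrM zgold_norm -intr_norm ler1z; have := golden_norm_neq0 h j h0; lia.
have h1 : 1 <= `|h%:~R : R| by rewrite -intr_norm ler1z; lia.
(* Eliminate j, using j tau = h - zgold h j. *)
have conjE : zgold_conj h j = h%:~R * (3 - tau) - zgold h j * (2 - tau).
  apply/eqP; rewrite -subr_eq0 -(tau_minpolyM j%:~R) /zgold /zgold_conj.
  by apply/eqP; ring.
have conj_le : `|zgold_conj h j| <= 3/2 * `|h%:~R| + l / 2.
  rewrite conjE (le_trans (ler_normB _ _)) // !normrM.
  rewrite (ger0_norm (_ : 0 <= 3 - tau)) ?(ger0_norm (_ : 0 <= 2 - tau)); try lra.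
  have := normr_ge0 (zgold h j); nra.
have := normr_ge0 (zgold h j); have := normr_ge0 (zgold_conj h j); nra.
Qed.

Lemma zgold_box u0 v0 : exists h j,
  u0 < zgold h j <= u0 + 1 /\ v0 < zgold_conj h j <= v0 + 4.
Proof.
have /andP[s1 s2] := sqrt5_bounds.
set y := (v0 - u0) / Num.sqrt 5.
have yE : y * Num.sqrt 5 = v0 - u0 by rewrite /y divfK // gt_eqF //; lra.
set j := Num.floor y + 1.
have jy : y < j%:~R <= y + 1.
  by have := floor_le y; have := floorD1_gt y; rewrite /j intrD => ? ?; lra.
have js5 : v0 - u0 < j%:~R * Num.sqrt 5 <= v0 - u0 + Num.sqrt 5.
  by rewrite -yE; move: jy => /andP[? ?]; apply/andP; split; nra.
set h := Num.floor (u0 + j%:~R * tau) + 1.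
have hj : u0 < zgold h j <= u0 + 1.
  have := floor_le (u0 + j%:~R * tau); have := floorD1_gt (u0 + j%:~R * tau).
  by rewrite /zgold /h intrD => ? ?; apply/andP; split; lra.
exists h, j; split => //.
rewrite -[zgold_conj h j](subrK (zgold h j)) zgold_conj_sub.
by move: hj js5 => /andP[? ?] /andP[? ?]; apply/andP; split; lra.
Qed.

Lemma zgold_mul_unit h j :
  zgold (2 * h + j) (h + j) = zgold h j * (2 - tau) /\
  zgold_conj (2 * h + j) (h + j) = zgold_conj h j * (tau + 1).
Proof.
rewrite /zgold /zgold_conj !intrD !intrM.
by split; apply/eqP; rewrite -subr_eq0 -(tau_minpolyM (- j%:~R)); apply/eqP; ring.
Qed.

Lemma zgold_mul_unitX k h j : exists h' j',
  zgold h' j' = zgold h j * (2 - tau) ^+ k /\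
  zgold_conj h' j' = zgold_conj h j * (tau + 1) ^+ k.
Proof.
elim: k => [|k [h' [j' [E E']]]]; first by exists h, j; rewrite !mulr1.
have [F F'] := zgold_mul_unit h' j'.
by exists (2 * h' + j'), (h' + j'); rewrite F F' E E' !exprSr !mulrA.
Qed.

Lemma tau_unit : (2 - tau) * (tau + 1) = 1.
Proof. by apply/eqP; rewrite -subr_eq0 -(tau_minpolyM (-1)); apply/eqP; ring. Qed.

(* A lattice point in a box, rescaled by a power of the unit tau + 1 = tau^2,
   which stretches the conjugate embedding and shrinks the other one. *)
Lemma zgold_cover (c l : R) : 0 < l < tau -> exists h j,
  c < zgold h j < c + l /\ 0 < zgold_conj h j <= 24 / l.
Proof.
move=> /andP[l0 ltau]; have /andP[t1 t2] := tau_bounds.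
have [k /andP[Ql1 Ql2]] :=
  @exists_expr_bracket _ (tau + 1) l 2 ltac:(lra) l0 ltac:(lra).
set Q := (tau + 1) ^+ k in Ql1 Ql2; set P := (2 - tau) ^+ k.
have PQ : P * Q = 1 by rewrite -exprMn tau_unit expr1n.
have Q0 : 0 < Q by rewrite exprn_gt0 //; lra.
have P0 : 0 < P by rewrite exprn_gt0 //; lra.
set z := 12 / l.
have zl : z * l = 12 by rewrite /z divfK // gt_eqF.
have [h' [j' [/andP[u1 u2] /andP[v1 v2]]]] := zgold_box (Q * c) (z * P - 2).
have [h [j [E E']]] := zgold_mul_unitX k h' j'.
have cE : Q * c * P = c by rewrite mulrC mulrA PQ mul1r.
have Pl : P * 2 <= l by nra.
have Ql : Q * l < 6 by lra.
have zP : z * P * Q = z by rewrite -mulrA PQ mulr1.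
exists h, j; rewrite E E' -/P -/Q; split; apply/andP; split.
- by rewrite -[X in X < _]cE ltr_pM2r.
- have : zgold h' j' * P <= (Q * c + 1) * P by rewrite ler_pM2r.
  by rewrite [(Q * c + 1) * P]mulrDl cE mul1r; lra.
- have : (z * P - 2) * Q < zgold_conj h' j' * Q by rewrite ltr_pM2r.
  by rewrite [(z * P - 2) * Q]mulrBl zP; nra.
- have : zgold_conj h' j' * Q <= (z * P - 2 + 4) * Q by rewrite ler_pM2r.
  rewrite (_ : 24 / l = 2 * z); last by rewrite /z; field; rewrite gt_eqF.
  by rewrite -addrA [(z * P + _) * Q]mulrDl zP; nra.
Qed.

(** * The sets Z(a,b) *)

Lemma modtau_itv (x : R) : 0 <= modtau x < tau.
Proof.
have t0 := tau_gt0.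
have := floor_le (x / tau); have := floorD1_gt (x / tau); rewrite intrD.
have xE : x / tau * tau = x by rewrite divfK // gt_eqF.
by rewrite /modtau => ? ?; apply/andP; split; nra.
Qed.

Lemma zgold_floorE (a : R) n :
  zgold n (Num.floor ((n%:~R - a) / tau)) - a = modtau (n%:~R - a).
Proof. by rewrite /modtau /zgold; ring. Qed.

Lemma ZabP (a b : R) n :
  Zab a b n <-> exists m, 0 < zgold n m - a < modtau (b - a).
Proof.
split=> [|[m /andP[m1 m2]]].
  by exists (Num.floor ((n%:~R - a) / tau)); rewrite zgold_floorE.
have t0 := tau_gt0; have /andP[_ l_lt] := modtau_itv (b - a).
suff mE : Num.floor ((n%:~R - a) / tau) = m.
  by rewrite /Zab /in_arc /= -zgold_floorE mE m1.
apply: floor_def; rewrite intrD ler_pdivlMr // ltr_pdivrMr //.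
by move: m1 m2; rewrite /zgold => ? ?; apply/andP; split; lra.
Qed.

Lemma Zab_sep {a b : R} {n1 n2 : int} : Zab a b n1 -> Zab a b n2 -> n1 != n2 ->
  1 <= 3 * modtau (b - a) * `|n1%:~R - n2%:~R|.
Proof.
move=> /ZabP[m1 /andP[u1 u1']] /ZabP[m2 /andP[u2 u2']] n12.
have /andP[l0 l_lt] := modtau_itv (b - a).
rewrite -intrB; apply: (@zgold_gap _ _ (m1 - m2)); first by rewrite (ltW l_lt) andbT; lra.
  by rewrite subr_eq0.
by rewrite zgoldB ltr_norml; apply/andP; split; lra.
Qed.

Lemma Zab_cover {a b : R} (x : R) : 0 < modtau (b - a) ->
  exists2 n, Zab a b n & `|n%:~R - x| <= 28 / modtau (b - a).
Proof.
have /andP[_ l_lt] := modtau_itv (b - a); set l := modtau (b - a) in l_lt * => l0.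
have /andP[t1 t2] := tau_bounds.
set n0 := Num.floor x; set m0 := Num.floor ((n0%:~R - a) / tau).
have /andP[u0 u0'] := modtau_itv (n0%:~R - a); rewrite -zgold_floorE -/m0 in u0 u0'.
have [h [j [/andP[c1 c2] /andP[v1 v2]]]] :=
  zgold_cover (- (zgold n0 m0 - a)) l ltac:(by rewrite l0 l_lt).
exists (n0 + h).
  by apply/ZabP; exists (m0 + j); rewrite zgoldD -/l; apply/andP; split; lra.
have hE := zgold_conj_combine h j.
have h_le : `|h%:~R| <= 1 + 24 / l.
  have t20 : 0 < tau + 2 by lra.
  rewrite ler_norml; apply/andP; split; nra.
have x_near : `|n0%:~R - x| <= 1.
  have := floor_le x; have := floorD1_gt x; rewrite -/n0 intrD ler_norml => ? ?.
  by apply/andP; split; lra.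
have l28 : 2 + 24 / l <= 28 / l.
  have : 0 < l^-1 by rewrite invr_gt0.
  have : l^-1 * l = 1 by rewrite mulVf // gt_eqF.
  nra.
rewrite intrD addrAC (le_trans (ler_normD _ _)) //.
lra.
Qed.

(** * The weight w *)

Lemma w_bounds (x : R) :
  (2 * pi * (1 + (x + 1/2) ^+ 2))^-1 <= w x <= 2 / (pi * (1 + (x + 1/2) ^+ 2)).
Proof.
have atan_cont : {within `[x, x + 1], continuous (@atan R)}.
  by apply/continuous_subspaceT => ?; exact: continuous_atan.
have [c /[!in_itv] /= /andP[c1 c2] atanE] :=
  @MVT R atan (fun y => (1 + y ^+ 2)^-1) x (x + 1) (ltr_pwDr ltr01 (lexx x))
    (fun y _ => is_derive1_atan y) atan_cont.
rewrite /Defs.w atanE addrAC subrr add0r mulr1 -invfM mulrC.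
have pi0 := @pi_gt0 R; set t := x + 1/2.
have ct : (c - t) ^+ 2 <= 1/4 by rewrite /t; nra.
have c0 : 0 < 1 + c ^+ 2 by have := sqr_ge0 c; lra.
have t0 : 0 < 1 + t ^+ 2 by have := sqr_ge0 t; lra.
rewrite -[2 / _]invf_div lef_pV2 ?posrE ?mulr_gt0 ?divr_gt0 //.
rewrite lef_pV2 ?posrE ?mulr_gt0 //.
apply/andP; split; rewrite -subr_ge0.
- have := sqr_ge0 (2 * t - c); rewrite !expr2 in ct *; nra.
- have := sqr_ge0 (2 * c - t); rewrite !expr2 in ct *; nra.
Qed.

Lemma w_gt0 (x : R) : 0 < w x.
Proof.
have /andP[+ _] := w_bounds x; apply: lt_le_trans.
by rewrite invr_gt0 !mulr_gt0 ?pi_gt0 // ltr_pwDl // sqr_ge0.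
Qed.

Lemma w_le_comparison (x y c p : R) :
  1 + (y + 1/2) ^+ 2 <= c * (1 + (x + 1/2) ^+ 2) * p -> w x <= 4 * c * w y * p.
Proof.
set A := 1 + (x + 1/2) ^+ 2; set B := 1 + (y + 1/2) ^+ 2 => BA.
have A0 : 0 < A by rewrite ltr_pwDl // sqr_ge0.
have B0 : 0 < B by rewrite ltr_pwDl // sqr_ge0.
have pi0 := @pi_gt0 R.
have cp0 : 0 <= c * p.
  have : 0 <= A * (c * p) by rewrite mulrCA mulrA; lra.
  by rewrite pmulr_rge0.
have /andP[_ wx_le] := w_bounds x; have /andP[wy_ge _] := w_bounds y.
rewrite -/A in wx_le; rewrite -/B in wy_ge.
apply: le_trans wx_le _.
apply: le_trans (_ : 4 * (c * p) * (2 * pi * B)^-1 <= _); last first.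
  rewrite (_ : 4 * c * w y * p = 4 * (c * p) * w y); last by ring.
  by rewrite ler_wpM2l // mulr_ge0.
rewrite -subr_ge0 (_ : _ - _ = 2 * (c * A * p - B) / (pi * A * B)); last first.
  by field; rewrite ?gt_eqF ?pnatr_eq0 ?mulr_gt0 //; lra.
by rewrite divr_ge0 ?mulr_ge0 // ?subr_ge0 // ltW.
Qed.

(** * Weighted sums dominated by a summable profile *)

Definition pronic_inv (m : nat) : R := (m.+1 * m.+2)%:R^-1.

Lemma pronic_inv_ge0 m : 0 <= pronic_inv m.
Proof. by rewrite invr_ge0. Qed.

Lemma pronic_inv_le1 m : pronic_inv m <= 1.
Proof. by rewrite invf_le1 ?ltr0n ?muln_gt0 // ler1n muln_gt0. Qed.

Lemma sum_pronic_inv n : \sum_(0 <= i < n) pronic_inv i = 1 - n.+1%:R^-1.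
Proof.
elim: n => [|n IH]; first by rewrite big_geq // invr1 subrr.
rewrite big_nat_recr //= IH /pronic_inv natrM.
have n0 : 0 <= n%:R :> R := ler0n _ _.
by rewrite -[n.+2%:R]natr1; field; apply/andP; split; rewrite gt_eqF //; lra.
Qed.

Lemma nneseries_pronic_inv_le1 : (\sum_(i <oo) (pronic_inv i)%:E <= 1)%E.
Proof.
apply: lime_le.
  by apply: is_cvg_nneseries => i _ _; rewrite lee_fin pronic_inv_ge0.
apply: nearW => n; rewrite sumEFin lee_fin sum_pronic_inv gerBl invr_ge0 //.
Qed.

Local Open Scope ereal_scope.

Lemma esum_inj_le_nneseries {T : choiceType} {Z : set T} {kap : T -> nat}
    {g : nat -> \bar R} : (forall m, 0 <= g m) -> set_inj Z kap ->
  \esum_(n in Z) g (kap n) <= \sum_(m <oo) g m.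
Proof.
move=> g0 kap_inj; rewrite -esum_image // nneseries_esumT //.
apply: ge_ereal_sup => _ [X [finX XZ] <-].
by apply: esum_ge; exists X.
Qed.

Lemma esum_pronic_inv_le {T : choiceType} {Z : set T} {kap : T -> nat} {c : R} :
  (0 <= c)%R -> set_inj Z kap ->
  \esum_(n in Z) (c * pronic_inv (kap n))%:E <= c%:E.
Proof.
move=> c0 kap_inj.
have g0 m : 0 <= (c * pronic_inv m)%:E by rewrite lee_fin mulr_ge0 // pronic_inv_ge0.
apply: le_trans (esum_inj_le_nneseries g0 kap_inj) _.
under eq_eseriesr do rewrite EFinM.
rewrite nneseriesZl; last by move=> i _; rewrite lee_fin pronic_inv_ge0.
rewrite -[leRHS]mule1; apply: lee_wpmul2l; rewrite ?lee_fin //.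
exact: nneseries_pronic_inv_le1.
Qed.
Local Close Scope ereal_scope.

Lemma powR_subr1 (x p : R) : 0 <= x -> 1 <= p -> x `^ p = x `^ (p - 1) * x.
Proof.
move=> x0 p1; rewrite -[in LHS](subrK 1 p) (@powRD _ x (p - 1) 1) ?powRr1 //.
by apply/implyP => /eqP; lra.
Qed.

Section Domination.
Context {T : choiceType} {Z : set T} {f : T -> R} {kap : T -> nat} {s : T} {K : R}.
Hypotheses (Zs : Z s) (kap_inj : set_inj Z kap) (fs_gt0 : 0 < f s).
Hypotheses (f_ge0 : forall n, Z n -> 0 <= f n)
  (f_dom : forall n, Z n -> f n <= K * f s * pronic_inv (kap n)).

Local Notation W p := (\esum_(n in Z) (f n `^ p)%:E).

Let K_ge0 : 0 <= K.
Proof.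
have Kp : 1 <= K * pronic_inv (kap s).
  by rewrite -(ler_pM2r fs_gt0) mul1r mulrAC f_dom.
by have := pronic_inv_ge0 (kap s); have := pronic_inv_le1 (kap s); nra.
Qed.

Let f_le n : Z n -> f n <= K * f s.
Proof.
move=> Zn; apply: le_trans (f_dom n Zn) _.
by rewrite ler_piMr ?pronic_inv_le1 // mulr_ge0 ?K_ge0 // ltW.
Qed.

Lemma esum_powR_ge p : ((f s `^ p)%:E <= W p)%E.
Proof.
apply: esum_ge; exists [set s]; last by rewrite fsbig_set1.
by split; [exact: finite_set1 | move=> _ ->].
Qed.

Lemma esum_powR_le p : 1 <= p -> (W p <= ((K * f s) `^ p)%:E)%E.
Proof.
move=> p1; have Kfs0 : 0 <= K * f s by rewrite mulr_ge0 ?K_ge0 // ltW.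
apply: le_trans (esum_pronic_inv_le (powR_ge0 _ _) kap_inj).
apply: le_esum => n Zn.
rewrite lee_fin powR_subr1 ?f_ge0 // [in leRHS]powR_subr1 // -mulrA.
apply: ler_pM; rewrite ?powR_ge0 ?f_ge0 //; last exact: f_dom.
by apply: ge0_ler_powR; rewrite ?nnegrE ?subr_ge0 ?f_ge0 ?f_le.
Qed.

Lemma fine_esum_powR_bounds p :
  1 <= p -> f s `^ p <= fine (W p) <= (K * f s) `^ p.
Proof.
move=> p1; have := esum_powR_ge p; have := esum_powR_le p p1.
by case: (W p) => //= x; rewrite !lee_fin => -> ->.
Qed.

Lemma fine_esum_powR_ratio :
  fine (W (3 / 2)) <= K `^ (5 / 2) * (fine (W (5 / 2)) / fine (W 1)).
Proof.
have /andP[lb1 ub1] := fine_esum_powR_bounds 1 (lexx 1).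
have /andP[_ ub3] := fine_esum_powR_bounds (3 / 2) ltac:(lra).
have /andP[lb5 _] := fine_esum_powR_bounds (5 / 2) ltac:(lra).
have W1_gt0 : 0 < fine (W 1) by apply: lt_le_trans lb1; rewrite powR_gt0.
have W_ge0 p : 0 <= fine (W p).
  by apply/fine_ge0/esum_ge0 => n _; rewrite lee_fin powR_ge0.
rewrite mulrA ler_pdivlMr //.
apply: le_trans (_ : (K * f s) `^ (5 / 2) <= _); last first.
  by rewrite powRM ?(ltW fs_gt0) // ler_wpM2l ?powR_ge0.
rewrite (_ : 5 / 2 = 3 / 2 + 1); last lra.
rewrite powRD; last by apply/implyP => /eqP; lra.
exact: ler_pM (W_ge0 _) (W_ge0 _) ub3 ub1.
Qed.
End Domination.

(** * Domination of w on Z(a,b) *)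

Lemma zigzag_floor_le (y : R) : (zigzag (Num.floor y))%:R <= 2 * `|y| + 2.
Proof.
apply: le_trans (_ : (2 * `|Num.floor y|)%N%:R <= _); first by rewrite ler_nat zigzag_le.
rewrite natrM natr_absz intr_norm.
have := floor_le y; have := floorD1_gt y; rewrite intrD => ? ?.
have : `|(Num.floor y)%:~R| <= `|y| + 1 :> R.
  have := ler_norm y; have := ler_norm (- y); rewrite normrN ler_norml => ? ?.
  by apply/andP; split; lra.
lra.
Qed.

Lemma floor_div_set_inj {T : Type} {Z : set T} {x : T -> R} {g : R} : 0 < g ->
  (forall n n', Z n -> Z n' -> `|x n - x n'| < g -> n = n') ->
  set_inj Z (fun n => Num.floor (x n / g)).
Proof.
move=> g0 sep n n' /set_mem Zn /set_mem Zn' eq_floor; apply: sep => //.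
have := floor_le (x n / g); have := floorD1_gt (x n / g).
have := floor_le (x n' / g); have := floorD1_gt (x n' / g).
rewrite eq_floor intrD => ? ? ? ?.
have : `|x n / g - x n' / g| < 1 by rewrite ltr_norml; apply/andP; split; lra.
by rewrite -mulrBl normrM [`|g^-1|]gtr0_norm ?invr_gt0 // ltr_pdivrMr // mul1r.
Qed.

Lemma exists_near_inf {T : Type} {Z : set T} (g : T -> R) : Z !=set0 ->
  (forall n, Z n -> 0 <= g n) -> exists2 s, Z s & forall n, Z n -> g s < g n + 1.
Proof.
move=> [n0 Zn0] g0.
have E_inf : has_inf (g @` Z).
  by split; [exists (g n0), n0 | exists 0 => _ [n Zn <-]; exact: g0].
have [_ [s Zs <-] gs_lt] := inf_adherent ltr01 E_inf.
exists s => // n Zn; apply: (lt_le_trans gs_lt); rewrite lerD2r.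
by apply: ge_inf; [case: E_inf | exists n].
Qed.

Lemma pronic_inv_bound (D T : R) m : 0 <= D -> 0 <= T ->
  (1 + D) * (m%:R + 2) <= 208 * (1 + T) ->
  1 + D ^+ 2 <= 2 * 208 ^+ 2 * (1 + T ^+ 2) * pronic_inv m.
Proof.
move=> D0 T0 DmT; have m0 : 0 <= m%:R :> R := ler0n _ _.
rewrite /pronic_inv natrM -[m.+2%:R]natr1 -[m.+1%:R]natr1.
rewrite ler_pdivlMr ?mulr_gt0 //; try lra.
have DmT2 : ((1 + D) * (m%:R + 2)) ^+ 2 <= (208 * (1 + T)) ^+ 2.
  by rewrite ler_sqr ?nnegrE ?mulr_ge0 //; lra.
apply: (@le_trans _ _ (((1 + D) * (m%:R + 2)) ^+ 2)).
  have D2 : 1 + D ^+ 2 <= (1 + D) ^+ 2 by rewrite !expr2; nra.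
  have m2 : (m%:R + 1) * (m%:R + 1 + 1) <= (m%:R + 2) ^+ 2 :> R.
    by rewrite !expr2; nra.
  rewrite exprMn; apply: ler_pM => //; rewrite ?addr_ge0 ?sqr_ge0 ?mulr_ge0 //; lra.
apply: le_trans DmT2 _.
rewrite exprMn (mulrC 2) -[_ * 2 * _]mulrA ler_wpM2l ?sqr_ge0 //.
by have := sqr_ge0 (1 - T); rewrite !expr2; nra.
Qed.

Lemma Zab_sep_scale {a b D : R} {n n' : int} :
  Zab a b n -> Zab a b n' -> n != n' ->
  D <= 28 / modtau (b - a) + 1 -> 1 + D <= 100 * `|n%:~R - n'%:~R|.
Proof.
move=> Zn Zn' nn' D_le; have := Zab_sep Zn Zn' nn'.
set l := modtau (b - a) in D_le *; set d := `|n%:~R - n'%:~R| => ld.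
have d1 : 1 <= d by rewrite /d -intrB -intr_norm ler1z; lia.
have l0 : 0 < l by have /andP[? _] := modtau_itv (b - a); nra.
have il : l^-1 <= 3 * d by rewrite -[l^-1]mulr1 ler_pdivrMl // mulrCA mulrA.
lra.
Qed.

Lemma Zab_w_dominated {a b : R} (phi : R) : modtau (b - a) != 0 -> exists s kap,
  [/\ Zab a b s, set_inj (Zab a b) kap & forall n, Zab a b n ->
    w (n%:~R - phi) <= 4 * (2 * 208 ^+ 2) * w (s%:~R - phi) * pronic_inv (kap n)].
Proof.
move=> ab.
have l0 : 0 < modtau (b - a) by have /andP[? _] := modtau_itv (b - a); rewrite lt_def ab.
pose t n : R := n%:~R - phi + 1/2.
have [nc Znc nc_near] := Zab_cover (phi - 1/2) l0.
have [s Zs s_near] :=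
  exists_near_inf (fun n => `|t n|) (ex_intro _ nc Znc) (fun n _ => normr_ge0 (t n)).
set D := `|t s|; have D0 : 0 <= D := normr_ge0 _.
have D_le : D <= 28 / modtau (b - a) + 1.
  have tnc : t nc = nc%:~R - (phi - 1/2) by rewrite /t; ring.
  by have := s_near nc Znc; rewrite -/D tnc; lra.
set g := (1 + D) / 100; have g0 : 0 < g by rewrite divr_gt0 //; lra.
have sep n n' : Zab a b n -> Zab a b n' -> `|t n - t n'| < g -> n = n'.
  move=> Zn Zn'; case: (eqVneq n n') => // nn'.
  have tnn : t n - t n' = n%:~R - n'%:~R by rewrite /t; ring.
  have := Zab_sep_scale Zn Zn' nn' D_le; rewrite tnn => sep_nn'.
  by rewrite ltNge /g ler_pdivrMr // mulrC sep_nn'.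
exists s, (fun n => zigzag (Num.floor (t n / g))).
split => // [n n' Zn Zn' /zigzag_inj|n Zn].
  exact: (floor_div_set_inj g0 sep).
apply: w_le_comparison; rewrite -/(t n) -/(t s).
rewrite -(real_normK (num_real (t n))) -(real_normK (num_real (t s))).
apply: pronic_inv_bound; rewrite ?normr_ge0 //.
set m := zigzag _.
have m_le : m%:R * g <= 2 * `|t n| + 2 * g.
  have := zigzag_floor_le (t n / g).
  rewrite -/m normrM [`|g^-1|]gtr0_norm ?invr_gt0 //.
  by rewrite -(ler_pM2r g0) mulrDl -mulrA divfK ?gt_eqF.
have := s_near n Zn; rewrite -/D; move: m_le; rewrite /g; lra.
Qed.
End Estimates.

Local Close Scope classical_set_scope.

Theorem corollary14 (R : realType) :
  exists C : R, 0 < C /\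
    forall a b phi : R, modtau (b - a) != 0 ->
      fine (Wsum a b phi (3 / 2)) <=
      C * (fine (Wsum a b phi (5 / 2)) / fine (Wsum a b phi 1)).
Proof.
exists ((4 * (2 * 208 ^+ 2)) `^ (5 / 2)); split; first by rewrite powR_gt0.
move=> a b phi ab; have [s [kap [Zs kap_inj w_dom]]] := Zab_w_dominated phi ab.
exact: (fine_esum_powR_ratio Zs kap_inj (w_gt0 _) (fun n _ => ltW (w_gt0 _)) w_dom).
Qed.
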